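(* Let $I$ be an ideal on a cardinal $\kappa$ and let $\theta$ be a regular cardinal. Then $I$ is $\theta$-decomposable (i.e. not $\theta$-indecomposable) if and only if there is a sequence $\langle A_i:i<\theta\rangle$ of $I$-positive subsets of $\kappa$ which are pairwise equal modulo $I$ and satisfy $\bigcap_{i<\theta}\bigcup_{i\leq j<\theta}A_j=\emptyset$.
   Context: By an ideal on a cardinal $\kappa$ we mean a proper ideal on $\kappa$ containing all bounded subsets of $\kappa$. $A$ is $I$-positive if $A\notin I$; $A,B$ are equal modulo $I$ if $A\setminus B\in I$ and $B\setminus A\in I$. $I$ is $\theta$-indecomposable if whenever $\langle A_i:i<\theta\rangle$ are subsets of $\kappa$ with $\bigcup_{i<\theta}A_i\notin I$, there is $w\subseteq\theta$ with $|w|<\theta$ and $\bigcup_{i\in w}A_i\notin I$. *)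

(* Ordinals/cardinals are represented by well-ordered types:
   a cardinal kappa is a type K with a strict well-order ltK such that
   K is an initial ordinal (no proper initial segment is equinumerous with K,
   i.e. K does not inject into any proper initial segment). *)
From Stdlib Require Import Classical.

Set Implicit Arguments.

Definition strict_well_order {T : Type} (lt : T -> T -> Prop) : Prop :=
  (forall x, ~ lt x x) /\
  (forall x y z, lt x y -> lt y z -> lt x z) /\
  (forall x y, lt x y \/ x = y \/ lt y x) /\
  well_founded lt.

Definition leT {T : Type} (lt : T -> T -> Prop) (x y : T) : Prop :=
  lt x y \/ x = y.

Definition injects (A B : Type) : Prop :=
  exists f : A -> B, forall x y, f x = f y -> x = y.

Definition is_cardinal {T : Type} (lt : T -> T -> Prop) : Prop :=
  strict_well_order lt /\
  forall a : T, ~ injects T {y : T | lt y a}.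

Definition small {T : Type} (w : T -> Prop) : Prop :=
  ~ injects T {x : T | w x}.

Definition bounded {T : Type} (lt : T -> T -> Prop) (X : T -> Prop) : Prop :=
  exists a : T, forall x, X x -> lt x a.

(* regular cardinal: an infinite cardinal theta whose cofinality is theta,
   i.e. every unbounded (cofinal) subset has cardinality theta *)
Definition regular_cardinal {T : Type} (lt : T -> T -> Prop) : Prop :=
  is_cardinal lt /\
  injects nat T /\
  forall X : T -> Prop, ~ bounded lt X -> injects T {x : T | X x}.

Definition ideal_on {K : Type} (lt : K -> K -> Prop)
  (I : (K -> Prop) -> Prop) : Prop :=
  I (fun _ => False) /\
  (forall A B : K -> Prop, I B -> (forall x, A x -> B x) -> I A) /\
  (forall A B : K -> Prop, I A -> I B -> I (fun x => A x \/ B x)) /\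
  ~ I (fun _ => True) /\
  (forall A : K -> Prop, bounded lt A -> I A).

Definition positive {K : Type} (I : (K -> Prop) -> Prop) (A : K -> Prop) : Prop :=
  ~ I A.

Definition eq_mod {K : Type} (I : (K -> Prop) -> Prop) (A B : K -> Prop) : Prop :=
  I (fun x => A x /\ ~ B x) /\ I (fun x => B x /\ ~ A x).

(* I is theta-indecomposable (theta given as the cardinal type Th) *)
Definition indecomposable {K Th : Type} (I : (K -> Prop) -> Prop) : Prop :=
  forall A : Th -> K -> Prop,
    ~ I (fun x => exists i, A i x) ->
    exists w : Th -> Prop, small w /\ ~ I (fun x => exists i, w i /\ A i x).

(* Forward direction: if [A] witnesses decomposability, keep each point only
   at the first index [k] with [x ∈ A k], i.e. pass to [A' k = A k ∖ ⋃_{l < k} A l];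
   the tails [B i = ⋃_{k ≥ i} A' k] of this disjointified family work.  [B i] misses only [⋃_{j < i} A j] from the
   positive union, a union over a small index set, hence in [I]; so the [B i]
   are positive and pairwise equal modulo [I].  A point lies in at most one
   [A' k], so it is in no [B i] with [i > k], and [θ] has no largest element.
   Backward direction: given the [A i] and any index [i0], let
   [C i = A i0 ∖ ⋃_{j ≥ i} A j].  As
   the limsup is empty, the [C i] cover the positive set [A i0]; but a small
   [w ⊆ θ] is bounded by some [a] (regularity), and [⋃_{i ∈ w} C i ⊆ A i0 ∖ A a],
   which is in [I]. *)
From Stdlib Require Import Classical.

Set Implicit Arguments.
Unset Strict Implicit.

Definition union_over {K Th : Type} (w : Th -> Prop) (A : Th -> K -> Prop)
  (x : K) : Prop :=
  exists i, w i /\ A i x.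

Definition first_occurrence {K Th : Type} (ltT : Th -> Th -> Prop)
  (A : Th -> K -> Prop) (k : Th) (x : K) : Prop :=
  A k x /\ forall l, ltT l k -> ~ A l x.

Lemma not_indecomposableP (K Th : Type) (I : (K -> Prop) -> Prop) :
  ~ @indecomposable K Th I <->
  exists A : Th -> K -> Prop,
    ~ I (fun x => exists i, A i x) /\ forall w, small w -> I (union_over w A).
Proof.
  split.
  - intro Hnd. apply not_all_ex_not in Hnd as [A HA].
    apply imply_to_and in HA as [Hpos Hsmall].
    exists A. split; [exact Hpos |].
    intros w Hw. apply NNPP. intro Hn. apply Hsmall. now exists w.
  - intros [A [Hpos Hsmall]] Hind.
    destruct (Hind A Hpos) as [w [Hw Hn]]. exact (Hn (Hsmall w Hw)).
Qed.

Section Cardinals.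

Variables (T : Type) (lt : T -> T -> Prop).

Lemma cardinal_segment_small (a : T) : is_cardinal lt -> small (fun j => lt j a).
Proof. intros [_ Hcard]. exact (Hcard a). Qed.

Hypothesis Hreg : regular_cardinal lt.

Lemma regular_small_bounded (w : T -> Prop) : small w -> bounded lt w.
Proof.
  intro Hw. apply NNPP. intro Hn. apply Hw. exact (proj2 (proj2 Hreg) w Hn).
Qed.

Lemma regular_inhabited : inhabited T.
Proof. destruct Hreg as [_ [[g _] _]]. exact (inhabits (g 0)). Qed.

(* If [i] were maximal, [{i}] would be unbounded, so the infinite [T] would
   inject into it. *)
Lemma regular_no_max (i : T) : exists j, lt i j.
Proof.
  destruct Hreg as [_ [[g Hg] Hcof]].
  apply NNPP. intro Hmax.
  assert (Hnb : ~ bounded lt (fun x => x = i)).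
  { intros [a Ha]. apply Hmax. exists a. now apply Ha. }
  destruct (Hcof _ Hnb) as [f Hf].
  assert (Hsingleton : forall u v : {x : T | x = i}, u = v).
  { intros [x px] [y py]. subst. f_equal. }
  assert (H01 : g 0 = g 1) by (apply Hf, Hsingleton).
  discriminate (Hg _ _ H01).
Qed.

End Cardinals.

Section FirstOccurrence.

Variables (K Th : Type) (ltT : Th -> Th -> Prop).
Hypothesis Hwo : strict_well_order ltT.

Lemma first_occurrence_exists (A : Th -> K -> Prop) (j : Th) (x : K) :
  A j x -> exists k, first_occurrence ltT A k x /\ leT ltT k j.
Proof.
  destruct Hwo as [_ [Htr [_ Hwf]]].
  induction j as [j IH] using (well_founded_ind Hwf). intro Hj.
  destruct (classic (exists l, ltT l j /\ A l x)) as [[l [Hlj Hl]] | Hnone].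
  - destruct (IH l Hlj Hl) as [k [Hk [Hkl | <-]]];
      exists k; split; try left; eauto.
  - exists j. split; [split |right]; eauto.
Qed.

Lemma first_occurrence_unique (A : Th -> K -> Prop) (k l : Th) (x : K) :
  first_occurrence ltT A k x -> first_occurrence ltT A l x -> k = l.
Proof.
  destruct Hwo as [_ [_ [Htot _]]].
  intros [Hk Hkmin] [Hl Hlmin].
  destruct (Htot k l) as [Hkl | [-> | Hlk]]; [| reflexivity |].
  - exfalso. exact (Hlmin k Hkl Hk).
  - exfalso. exact (Hkmin l Hlk Hl).
Qed.

Lemma union_sub_segment_tail (A : Th -> K -> Prop) (i : Th) (x : K) :
  (exists j, A j x) ->
  union_over (fun j => ltT j i) A x \/
  union_over (leT ltT i) (first_occurrence ltT A) x.
Proof.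
  destruct Hwo as [_ [_ [Htot _]]].
  intros [j Hj]. destruct (first_occurrence_exists Hj) as [k [Hk _]].
  destruct (Htot k i) as [Hki | [-> | Hik]].
  - left. exists k. split; [exact Hki | apply Hk].
  - right. exists i. split; [right |]; auto.
  - right. exists k. split; [left |]; auto.
Qed.

Lemma tail_diff_sub_segment (A : Th -> K -> Prop) (i j : Th) (x : K) :
  union_over (leT ltT i) (first_occurrence ltT A) x ->
  ~ union_over (leT ltT j) (first_occurrence ltT A) x ->
  union_over (fun k => ltT k j) A x.
Proof.
  destruct Hwo as [_ [_ [Htot _]]].
  intros [k [_ Hk]] Hnot. exists k. split; [| apply Hk].
  destruct (Htot k j) as [Hkj | [<- | Hjk]]; [exact Hkj | |];
    exfalso; apply Hnot; exists k; split; try apply Hk; unfold leT; auto.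
Qed.

Lemma tail_union_antitone (A : Th -> K -> Prop) (i j : Th) (x : K) :
  leT ltT i j -> union_over (leT ltT j) A x -> union_over (leT ltT i) A x.
Proof.
  destruct Hwo as [_ [Htr _]].
  intros Hij [k [Hjk Hk]]. exists k. split; [| exact Hk].
  destruct Hij as [Hij | <-]; [left | exact Hjk].
  destruct Hjk as [Hjk | <-]; eauto.
Qed.

Lemma first_occurrence_tails_limsup_empty (A : Th -> K -> Prop) (i0 : Th) :
  (forall i, exists j, ltT i j) ->
  forall x, ~ (forall i,
    union_over (leT ltT i)
      (fun j => union_over (leT ltT j) (first_occurrence ltT A)) x).
Proof.
  destruct Hwo as [Hirr [Htr _]].
  intros Hnomax x Hlimsup.
  assert (Htails : forall i, union_over (leT ltT i) (first_occurrence ltT A) x).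
  { intro i. destruct (Hlimsup i) as [j [Hij Hj]].
    exact (tail_union_antitone Hij Hj). }
  destruct (Htails i0) as [k0 [_ Hk0]].
  destruct (Hnomax k0) as [i Hk0i].
  destruct (Htails i) as [k [Hik Hk]].
  assert (Hk0k : ltT k0 k) by (destruct Hik as [Hik | <-]; eauto).
  rewrite (first_occurrence_unique Hk Hk0) in Hk0k.
  exact (Hirr _ Hk0k).
Qed.

End FirstOccurrence.

Section Decomposition.

Variables (K : Type) (ltK : K -> K -> Prop) (I : (K -> Prop) -> Prop).
Hypothesis HI : ideal_on ltK I.

Lemma ideal_sub (A B : K -> Prop) : I B -> (forall x, A x -> B x) -> I A.
Proof. destruct HI as [_ [Hsub _]]. apply Hsub. Qed.

Lemma ideal_union (A B : K -> Prop) : I A -> I B -> I (fun x => A x \/ B x).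
Proof. destruct HI as [_ [_ [Hun _]]]. apply Hun. Qed.

Variables (Th : Type) (ltT : Th -> Th -> Prop).
Hypothesis Hwo : strict_well_order ltT.

Section Forward.

Variable A : Th -> K -> Prop.
Hypothesis Hsegment : forall i, I (union_over (fun j => ltT j i) A).

Lemma first_occurrence_tail_positive (i : Th) :
  ~ I (fun x => exists j, A j x) ->
  positive I (union_over (leT ltT i) (first_occurrence ltT A)).
Proof.
  intros Hpos Htail. apply Hpos.
  apply (ideal_sub (ideal_union (Hsegment i) Htail)).
  intros x Hx. exact (union_sub_segment_tail Hwo i Hx).
Qed.

Lemma first_occurrence_tails_eq_mod (i j : Th) :
  eq_mod I (union_over (leT ltT i) (first_occurrence ltT A))
           (union_over (leT ltT j) (first_occurrence ltT A)).
Proof.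
  split; [apply (ideal_sub (Hsegment j)) | apply (ideal_sub (Hsegment i))];
    intros x [Hx Hnot]; exact (tail_diff_sub_segment Hwo Hx Hnot).
Qed.

End Forward.

Lemma tail_complements_cover (A : Th -> K -> Prop) (i0 : Th) (x : K) :
  ~ (forall i, union_over (leT ltT i) A x) ->
  A i0 x -> exists i, A i0 x /\ ~ union_over (leT ltT i) A x.
Proof.
  intros Hlimsup Hx. apply not_all_ex_not in Hlimsup as [i Hi]. now exists i.
Qed.

Lemma bounded_union_tail_complements (A : Th -> K -> Prop) (i0 : Th)
  (w : Th -> Prop) :
  bounded ltT w -> (forall i j, eq_mod I (A i) (A j)) ->
  I (union_over w (fun i x => A i0 x /\ ~ union_over (leT ltT i) A x)).
Proof.
  intros [a Ha] Heq.
  apply (ideal_sub (proj1 (Heq i0 a))).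
  intros x [i [Hwi [Hx Hnot]]]. split; [exact Hx |].
  intro Hax. apply Hnot. exists a. split; [left; auto | exact Hax].
Qed.

End Decomposition.

Theorem proposition2p2 (K : Type) (ltK : K -> K -> Prop) (HK : is_cardinal ltK)
  (I : (K -> Prop) -> Prop) (HI : ideal_on ltK I)
  (Th : Type) (ltT : Th -> Th -> Prop) (HT : regular_cardinal ltT) :
  ~ @indecomposable K Th I <->
  exists A : Th -> K -> Prop,
    (forall i, positive I (A i)) /\
    (forall i j, eq_mod I (A i) (A j)) /\
    (forall x : K, ~ (forall i : Th, exists j : Th, leT ltT i j /\ A j x)).
Proof.
  pose proof (proj1 (proj1 HT)) as Hwo.
  destruct (regular_inhabited HT) as [i0].
  rewrite not_indecomposableP. split.
  - intros [A [Hpos Hsmall]].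
    assert (Hsegment : forall i, I (union_over (fun j => ltT j i) A))
      by (intro i; apply Hsmall, cardinal_segment_small, HT).
    exists (fun i => union_over (leT ltT i) (first_occurrence ltT A)).
    split; [| split].
    + intro i. exact (first_occurrence_tail_positive HI Hwo Hsegment Hpos).
    + exact (first_occurrence_tails_eq_mod HI Hwo Hsegment).
    + exact (first_occurrence_tails_limsup_empty Hwo i0 (regular_no_max HT)).
  - intros [A [Hpos [Heq Hlimsup]]].
    exists (fun i x => A i0 x /\ ~ union_over (leT ltT i) A x). split.
    + intro Hcover. apply (Hpos i0), (ideal_sub HI Hcover).
      intros x Hx. exact (tail_complements_cover (Hlimsup x) Hx).
    + intros w Hw.
      exact (bounded_union_tail_complements HI i0 (regular_small_bounded HT Hw) Heq).
Qed.
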